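(* Let $\eta>0$, let $C$ be a cost vector, and let $S=\sum_{ij\in\mathcal E}\Big[\log\sum_{x_i,x_j\in\chi}e^{-\eta C_{ij}(x_i,x_j)}+\sum_{x_i,x_j\in\chi}\frac{\eta}{d^2}C_{ij}(x_i,x_j)\Big]+\sum_{i\in\mathcal V}\Big[\log\sum_{x\in\chi}e^{-\eta C_i(x)}+\sum_{x\in\chi}\frac{\eta}{d}C_i(x)\Big]$ and $\mathcal S_0=\min\big(\|\eta C/d+\exp(-\eta C)\|_1,\,S\big)$. For any $\epsilon>0$, the EMP algorithm (run with parameters $C,\eta,\epsilon$) reaches an iterate satisfying $\|\Gamma_{ij}\mathbb 1-\Gamma_i\|_1<\epsilon$ and $\|\Gamma_{ij}^\top\mathbb 1-\Gamma_j\|_1<\epsilon$ for all $ij\in\mathcal E$ within $\lceil 4\mathcal S_0(\deg(G)+1)/\epsilon^2\rceil$ iterations for EMP-cyclic and within $\lceil 4\mathcal S_0/\epsilon^2\rceil$ iterations for EMP-greedy.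
   Context: Let $G=(\mathcal V,\mathcal E)$ be a graph with $\mathcal V=\{1,\dots,n\}$, every vertex on at least one edge, edges written as ordered pairs $ij$, $\deg(G)$ its maximum degree, and $\chi=\{0,\dots,d-1\}$. A marginal vector $\Gamma$ consists of $\Gamma_i\in\mathbb R^d$ ($i\in\mathcal V$) and $\Gamma_{ij}\in\mathbb R^{d\times d}$ ($ij\in\mathcal E$); a cost vector $C$ has the same shape; $\exp$ is entrywise, $\|\cdot\|_1$ is the sum of absolute values of all entries, $\mathbb 1$ is the all-ones vector. Define the following update maps on positive marginal vectors (all components not mentioned are unchanged): $\mathcal P_{ij\to i}$: $\Gamma_{ij}(x_i,x_j)\leftarrow\Gamma_{ij}(x_i,x_j)\sqrt{\Gamma_i(x_i)/\sum_x\Gamma_{ij}(x_i,x)}$, $\Gamma_i(x_i)\leftarrow\Gamma_i(x_i)\sqrt{\sum_x\Gamma_{ij}(x_i,x)/\Gamma_i(x_i)}$; $\mathcal P_{ij,i}$: divide $\Gamma_i$ and $\Gamma_{ij}$ each by the sum of its entries; $\mathcal P_{ij\to j}$: $\Gamma_{ij}(x_i,x_j)\leftarrow\Gamma_{ij}(x_i,x_j)\sqrt{\Gamma_j(x_j)/\sum_x\Gamma_{ij}(x,x_j)}$, $\Gamma_j(x_j)\leftarrow\Gamma_j(x_j)\sqrt{\sum_x\Gamma_{ij}(x,x_j)/\Gamma_j(x_j)}$; $\mathcal P_{ij,j}$: divide $\Gamma_j$ and $\Gamma_{ij}$ each by the sum of its entries. (These are the Bregman projections w.r.t. $\sum\Gamma(\log\Gamma-1)$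 onto the sets where the row sums of $\Gamma_{ij}$ equal $\Gamma_i$, where $\Gamma_i$ and $\Gamma_{ij}$ sum to one, etc.) EMP starts from $\Gamma^{(1)}$ obtained from $\exp(-\eta C)$ by normalizing each $\Gamma_i$ and each $\Gamma_{ij}$ to sum to $1$. At iteration $k$, if $\max_{ij\in\mathcal E}\max\{\|\Gamma^{(k)}_{ij}\mathbb 1-\Gamma^{(k)}_i\|_1,\|(\Gamma^{(k)}_{ij})^\top\mathbb 1-\Gamma^{(k)}_j\|_1\}<\epsilon$ the algorithm stops and outputs the rounding $x_i=\arg\max_x\Gamma^{(k)}_i(x)$. Otherwise: EMP-cyclic applies, for each edge $ij\in\mathcal E$ in a fixed order, $\mathcal P_{ij,j}\circ\mathcal P_{ij\to j}\circ\mathcal P_{ij,i}\circ\mathcal P_{ij\to i}$, the result being $\Gamma^{(k+1)}$; EMP-greedy picks an edge $ij$ maximizing $\max\{\|\Gamma^{(k)}_{ij}\mathbb 1-\Gamma^{(k)}_i\|_1,\|(\Gamma^{(k)}_{ij})^\top\mathbb 1-\Gamma^{(k)}_j\|_1\}$ and sets $\Gamma^{(k+1)}=\mathcal P_{ij,i}\circ\mathcal P_{ij\to i}(\Gamma^{(k)})$ if $\|\Gamma^{(k)}_{ij}\mathbb 1-\Gamma^{(k)}_i\|_1>\|(\Gamma^{(k)}_{ij})^\top\mathbb 1-\Gamma^{(k)}_j\|_1$ and $\Gamma^{(k+1)}=\mathcal P_{ij,j}\circ\mathcal P_{ij\to j}(\Gamma^{(k)})$ otherwise. *)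

From HB Require Import structures.
From mathcomp Require Import all_boot all_order all_algebra.
From mathcomp Require Import all_classical all_reals all_analysis.
Set Implicit Arguments. Unset Strict Implicit. Unset Printing Implicit Defensive.
Import Order.TTheory GRing.Theory Num.Theory.
Local Open Scope ring_scope.

Section EMP.
Variables (R : realType) (n d : nat).

(* Edge components are stored for every ordered pair (i,j); only
   those with (i,j) in the edge list are ever read. *)
Record marg := Marg {
  mnode : 'I_n -> 'I_d -> R;
  medge : 'I_n -> 'I_n -> 'I_d -> 'I_d -> R }.

Definition edge := ('I_n * 'I_n)%type.

Definition is_graph (E : seq edge) : Prop :=
  [/\ uniq E,
      (forall e, e \in E -> e.1 != e.2),
      (forall i j, (i, j) \in E -> (j, i) \notin E) &
      (forall v : 'I_n, exists2 e, e \in E & (e.1 == v) || (e.2 == v))].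

Definition vdeg (E : seq edge) (v : 'I_n) : nat :=
  count (fun e : edge => (e.1 == v) || (e.2 == v)) E.

Definition maxdeg (E : seq edge) : nat := \max_(v < n) vdeg E v.

Definition rowsum (M : 'I_d -> 'I_d -> R) (a : 'I_d) : R := \sum_(b < d) M a b.
Definition colsum (M : 'I_d -> 'I_d -> R) (b : 'I_d) : R := \sum_(a < d) M a b.

Definition err_row (G : marg) (e : edge) : R :=
  \sum_(a < d) `| rowsum (medge G e.1 e.2) a - mnode G e.1 a |.
Definition err_col (G : marg) (e : edge) : R :=
  \sum_(b < d) `| colsum (medge G e.1 e.2) b - mnode G e.2 b |.
Definition err (G : marg) (e : edge) : R := Num.max (err_row G e) (err_col G e).

Definition converged (E : seq edge) (eps : R) (G : marg) : Prop :=
  forall e, e \in E -> err_row G e < eps /\ err_col G e < eps.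

Definition upd_node (G : marg) (i : 'I_n) (f : 'I_d -> R) : marg :=
  Marg (fun k => if k == i then f else mnode G k) (medge G).
Definition upd_edge (G : marg) (i j : 'I_n) (M : 'I_d -> 'I_d -> R) : marg :=
  Marg (mnode G) (fun k l => if (k == i) && (l == j) then M else medge G k l).

Definition normalize1 (f : 'I_d -> R) : 'I_d -> R :=
  fun a => f a / \sum_(x < d) f x.
Definition normalize2 (M : 'I_d -> 'I_d -> R) : 'I_d -> 'I_d -> R :=
  fun a b => M a b / \sum_(x < d) \sum_(y < d) M x y.

Definition P_to_i (e : edge) (G : marg) : marg :=
  let: (i, j) := e in
  let M := medge G i j in let g := mnode G i in
  upd_node (upd_edge G i j
              (fun a b => M a b * Num.sqrt (g a / rowsum M a)))
           i (fun a => g a * Num.sqrt (rowsum M a / g a)).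
Definition P_to_j (e : edge) (G : marg) : marg :=
  let: (i, j) := e in
  let M := medge G i j in let g := mnode G j in
  upd_node (upd_edge G i j
              (fun a b => M a b * Num.sqrt (g b / colsum M b)))
           j (fun b => g b * Num.sqrt (colsum M b / g b)).
Definition P_norm_i (e : edge) (G : marg) : marg :=
  let: (i, j) := e in
  upd_node (upd_edge G i j (normalize2 (medge G i j))) i (normalize1 (mnode G i)).
Definition P_norm_j (e : edge) (G : marg) : marg :=
  let: (i, j) := e in
  upd_node (upd_edge G i j (normalize2 (medge G i j))) j (normalize1 (mnode G j)).

Definition emp_init (eta : R) (C : marg) : marg :=
  Marg (fun i => normalize1 (fun x => expR (- (eta * mnode C i x))))
       (fun i j => normalize2 (fun a b => expR (- (eta * medge C i j a b)))).

Definition cyclic_step (E : seq edge) (G : marg) : marg :=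
  foldl (fun H e => P_norm_j e (P_to_j e (P_norm_i e (P_to_i e H)))) G E.

(* EMP-cyclic iterates: emp_cyclic E eta C t = Gamma^(t+1) *)
Definition emp_cyclic (E : seq edge) (eta : R) (C : marg) (t : nat) : marg :=
  iter t (cyclic_step E) (emp_init eta C).

Definition greedy_update (e : edge) (G : marg) : marg :=
  if err_row G e > err_col G e then P_norm_i e (P_to_i e G)
  else P_norm_j e (P_to_j e G).

(* Gs is a run of EMP-greedy (Gs t = Gamma^(t+1)), with arbitrary tie-breaking
   among maximizing edges; the update rule is only imposed while the
   algorithm has not stopped. *)
Definition emp_greedy_run (E : seq edge) (eta eps : R) (C : marg)
    (Gs : nat -> marg) : Prop :=
  Gs 0%N = emp_init eta C /\
  forall t, ~ converged E eps (Gs t) ->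
    exists2 e, e \in E /\ (forall e', e' \in E -> err (Gs t) e' <= err (Gs t) e)
             & Gs t.+1 = greedy_update e (Gs t).

Definition S_const (E : seq edge) (eta : R) (C : marg) : R :=
  \sum_(e <- E)
     (ln (\sum_(a < d) \sum_(b < d) expR (- (eta * medge C e.1 e.2 a b)))
      + \sum_(a < d) \sum_(b < d) eta / (d%:R ^+ 2) * medge C e.1 e.2 a b)
  + \sum_(i < n)
     (ln (\sum_(x < d) expR (- (eta * mnode C i x)))
      + \sum_(x < d) eta / d%:R * mnode C i x).

Definition l1_term (E : seq edge) (eta : R) (C : marg) : R :=
  \sum_(i < n) \sum_(x < d) `| eta * mnode C i x / d%:R + expR (- (eta * mnode C i x)) |
  + \sum_(e <- E) \sum_(a < d) \sum_(b < d)
      `| eta * medge C e.1 e.2 a b / d%:R + expR (- (eta * medge C e.1 e.2 a b)) |.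

Definition S0 (E : seq edge) (eta : R) (C : marg) : R :=
  Num.min (l1_term E eta C) (S_const E eta C).

End EMP.

From HB Require Import structures.
From mathcomp Require Import all_boot all_order all_algebra.
From mathcomp Require Import all_classical all_reals all_analysis.
From mathcomp Require Import ring lra.
Import Order.TTheory GRing.Theory Num.Theory.
Local Open Scope ring_scope.
Set Implicit Arguments. Unset Strict Implicit. Unset Printing Implicit Defensive.

(* The potential Phi(G) = sum_i KL(1/d || G_i) + sum_(ij in E) KL(1/d^2 || G_ij), the
   generalized Kullback-Leibler divergence of G from the uniform marginal vector, is
   nonnegative, and a Gibbs-variational computation bounds it by S_0 at the first iterate.
   A half-step P_(ij,i) o P_(ij->i) maps G_i to p q / s and G_ij to G_ij (p / q) / s, where
   p = sqrt G_i, q = sqrt (G_ij 1) and s = sum p q is their Bhattacharyya coefficient.  It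
   lowers Phi by -2 ln s, which dominates the squared Hellinger distance H = sum (q - p)^2,
   while the marginal error ||G_ij 1 - G_i||_1 and the moves of G_i and G_ij are all at most
   2 sqrt H.  Hence each greedy step lowers Phi by eps^2 / 4.  In a cyclic sweep, some
   half-step p sees an error >= eps at the start; until p is applied, that error changes
   only through the at most deg(G) earlier half-steps touching the node or edge it reads,
   and Cauchy-Schwarz over these and p itself lowers Phi by eps^2 / (4 (deg(G) + 1)).
   Since Phi >= 0, the bounds on the number of iterations follow. *)

Lemma ln_le_subr1 (R : realType) (x : R) : 0 < x -> ln x <= x - 1.
Proof.
by move=> x_gt0; have := @le_ln1Dx R (x - 1); rewrite [1 + _]addrC subrK; apply; lra.
Qed.

Section SqrtFacts.
Variable R : rcfType.

Lemma sqrt_add_le_sqrtM (a b c e : R) : 0 <= a -> 0 <= b -> 0 <= c -> 0 <= e ->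
  Num.sqrt (a * b) + Num.sqrt (c * e) <= Num.sqrt ((a + c) * (b + e)).
Proof.
move=> a0 b0 c0 e0.
rewrite -ler_sqr ?nnegrE ?addr_ge0 ?sqrtr_ge0 // sqrrD !sqr_sqrtr ?mulr_ge0 ?addr_ge0 //.
set u := Num.sqrt (a * e); set v := Num.sqrt (c * b).
have -> : Num.sqrt (a * b) * Num.sqrt (c * e) = u * v.
  by rewrite -!sqrtrM ?mulr_ge0 //; congr Num.sqrt; ring.
have u2 : u ^+ 2 = a * e by rewrite sqr_sqrtr ?mulr_ge0.
have v2 : v ^+ 2 = c * b by rewrite sqr_sqrtr ?mulr_ge0.
have := sqr_ge0 (u - v); rewrite sqrrB u2 v2 mulrDl !mulrDr; lra.
Qed.

Lemma sqr_le_of_le_2sqrt (x y : R) : 0 <= x -> 0 <= y -> x <= 2 * Num.sqrt y -> x ^+ 2 <= 4 * y.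
Proof.
move=> x0 y0 x_le; have : x ^+ 2 <= (2 * Num.sqrt y) ^+ 2.
  by rewrite ler_sqr ?nnegrE ?mulr_ge0 ?sqrtr_ge0.
by rewrite exprMn sqr_sqrtr //; lra.
Qed.

End SqrtFacts.

Section FinSums.
Variables (R : rcfType) (I : finType).
Implicit Types x y : I -> R.

Lemma psumr_gt0 (i0 : I) x : (forall i, 0 < x i) -> 0 < \sum_i x i.
Proof.
move=> x_gt0; rewrite (bigD1 i0) //= ltr_pwDl //.
by apply: sumr_ge0 => i _; exact: ltW.
Qed.

Lemma sum_mul_sqr_le x y :
  (\sum_i x i * y i) ^+ 2 <= (\sum_i x i ^+ 2) * (\sum_i y i ^+ 2).
Proof.
have -> : (\sum_i x i * y i) ^+ 2 = \sum_i \sum_j (x i * y i) * (x j * y j).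
  by rewrite expr2 mulr_suml; apply: eq_bigr => i _; rewrite mulr_sumr.
have prodE : (\sum_i x i ^+ 2) * (\sum_i y i ^+ 2) = \sum_i \sum_j x i ^+ 2 * y j ^+ 2.
  by rewrite mulr_suml; apply: eq_bigr => i _; rewrite mulr_sumr.
have prod_sym : (\sum_i x i ^+ 2) * (\sum_i y i ^+ 2) = \sum_i \sum_j x j ^+ 2 * y i ^+ 2.
  by rewrite prodE exchange_big.
have sum_sym : \sum_i \sum_j (x i ^+ 2 * y j ^+ 2 + x j ^+ 2 * y i ^+ 2) =
    2 * ((\sum_i x i ^+ 2) * (\sum_i y i ^+ 2)).
  under eq_bigr do rewrite big_split.
  by rewrite big_split /= -prodE -prod_sym mulr2n mulrDl mul1r.
suff : 2 * \sum_i \sum_j (x i * y i) * (x j * y j) <= 2 * ((\sum_i x i ^+ 2) * (\sum_i y i ^+ 2)).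
  lra.
rewrite -sum_sym mulr_sumr; apply: ler_sum => i _; rewrite mulr_sumr; apply: ler_sum => j _.
have := sqr_ge0 (x i * y j - x j * y i); nra.
Qed.

Lemma sum_mul_le_sqrt x y :
  \sum_i x i * y i <= Num.sqrt (\sum_i x i ^+ 2) * Num.sqrt (\sum_i y i ^+ 2).
Proof.
rewrite -sqrtrM; last by apply: sumr_ge0 => i _; exact: sqr_ge0.
by rewrite (le_trans (ler_norm _)) // -sqrtr_sqr ler_wsqrtr // sum_mul_sqr_le.
Qed.

End FinSums.

Section Hellinger.
Variables (R : realType) (I : finType) (p q : I -> R).
Hypotheses (p_gt0 : forall i, 0 < p i) (q_gt0 : forall i, 0 < q i).
Hypotheses (p_norm1 : \sum_i p i ^+ 2 = 1) (q_norm1 : \sum_i q i ^+ 2 = 1).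
Let s := \sum_i p i * q i.
Let H := \sum_i (q i - p i) ^+ 2.

Lemma hellingerE : H = 2 - 2 * s.
Proof.
rewrite /H /s (eq_bigr (fun i => q i ^+ 2 + p i ^+ 2 - 2 * (p i * q i))); last first.
  by move=> i _; rewrite sqrrB; ring.
by rewrite !big_split /= sumrN -mulr_sumr q_norm1 p_norm1.
Qed.

Lemma bhattacharyya_gt0 : 0 < s.
Proof.
have [i _ | I0] := pickP I; first by apply: (psumr_gt0 i) => j; rewrite mulr_gt0.
by move: p_norm1; rewrite big_pred0 // => /eqP; rewrite eq_sym oner_eq0.
Qed.

Lemma hellinger_le_ln : H <= - 2 * ln s.
Proof. by rewrite hellingerE; have := ln_le_subr1 bhattacharyya_gt0; lra. Qed.

Let H_ge0 : 0 <= H. Proof. by apply: sumr_ge0 => i _; exact: sqr_ge0. Qed.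

Let sum_normD_sqr : \sum_i `|q i - p i| ^+ 2 = H.
Proof. by apply: eq_bigr => i _; rewrite real_normK ?num_real. Qed.

Lemma sum_sqr_sub_le : \sum_i `|q i ^+ 2 - p i ^+ 2| <= 2 * Num.sqrt H.
Proof.
have -> : \sum_i `|q i ^+ 2 - p i ^+ 2| = \sum_i `|q i - p i| * (q i + p i).
  apply: eq_bigr => i _; rewrite subr_sqr normrM [`|q i + p i|]ger0_norm //.
  by rewrite addr_ge0 // ltW.
rewrite (le_trans (sum_mul_le_sqrt _ _)) // sum_normD_sqr mulrC ler_wpM2r ?sqrtr_ge0 //.
have -> : 2 = Num.sqrt (\sum_i (2 * q i ^+ 2 + 2 * p i ^+ 2)) :> R.
  rewrite big_split /= -!mulr_sumr q_norm1 p_norm1 !mulr1.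
  have -> : 2 + 2 = 2 ^+ 2 :> R by ring.
  by rewrite sqrtr_sqr ger0_norm.
apply: ler_wsqrtr; apply: ler_sum => i _.
by move: (sqr_ge0 (q i - p i)); rewrite sqrrB sqrrD; lra.
Qed.

Lemma sum_geomean_sub_le : \sum_i `|p i * q i / s - p i ^+ 2| <= 2 * Num.sqrt H.
Proof.
have s_gt0 := bhattacharyya_gt0; have s_le1 : s <= 1 by have := hellingerE; have := H_ge0; lra.
have split_le : \sum_i `|p i * q i / s - p i ^+ 2| <=
    \sum_i p i * q i * (s^-1 - 1) + \sum_i p i * `|q i - p i|.
  rewrite -big_split /=; apply: ler_sum => i _.
  have -> : p i * q i / s - p i ^+ 2 = p i * q i * (s^-1 - 1) + p i * (q i - p i).
    by rewrite mulrBr mulr1; ring.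
  rewrite (le_trans (ler_normD _ _)) // lerD //.
    rewrite ger0_norm // mulr_ge0 ?subr_ge0 ?invf_ge1 //.
    by rewrite mulr_ge0 // ltW.
  by rewrite normrM (ger0_norm (ltW (p_gt0 i))).
rewrite (le_trans split_le) // -mulr_suml -/s mulrBr divff ?gt_eqF // mulr1.
have move_le : \sum_i p i * `|q i - p i| <= Num.sqrt H.
  rewrite (le_trans (sum_mul_le_sqrt _ _)) // p_norm1 sqrtr1 mul1r.
  by rewrite sum_normD_sqr.
have gap_le : 1 - s <= Num.sqrt H.
  have sqrtH2 : Num.sqrt H ^+ 2 = 2 - 2 * s by rewrite sqr_sqrtr // hellingerE.
  have := sqrtr_ge0 H; nra.
lra.
Qed.

End Hellinger.

Section KullbackLeibler.
Variable R : realType.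
Implicit Types u v y : R.

Definition kl u y := u * ln (u / y) - u + y.

Lemma kl_ge0 u y : 0 < u -> 0 < y -> 0 <= kl u y.
Proof.
move=> u_gt0 y_gt0; have := ln_le_subr1 (divr_gt0 y_gt0 u_gt0).
rewrite /kl !ln_div ?posrE // => /(ler_wpM2l (ltW u_gt0)).
have -> : u * (y / u - 1) = y - u by field; rewrite gt_eqF.
by rewrite mulrBr; lra.
Qed.

Lemma kl_sub u y y' : 0 < u -> 0 < y -> 0 < y' ->
  kl u y - kl u y' = u * (ln y' - ln y) + (y - y').
Proof. by move=> u_gt0 y_gt0 y'_gt0; rewrite /kl !ln_div ?posrE //; ring. Qed.

Section Gibbs.
Variables (I : finType) (u : R) (c : I -> R).
Hypotheses (u_gt0 : 0 < u) (u_card : u * #|I|%:R = 1).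
Local Notation w x := (expR (- c x)).
Local Notation Z := (\sum_x w x).

Let card_gt0 : (0 < #|I|)%N.
Proof.
by rewrite lt0n; apply/eqP => I0; move: u_card; rewrite I0 mulr0 => /eqP; rewrite eq_sym oner_eq0.
Qed.

Let Z_gt0 : 0 < Z.
Proof.
have /card_gt0P [i _] := card_gt0.
by apply: (psumr_gt0 i) => x; exact: expR_gt0.
Qed.

Lemma kl_gibbsE : \sum_x kl u (w x / Z) = ln (u * Z) + u * \sum_x c x.
Proof.
rewrite (eq_bigr (fun x => u * ln (u * Z) + u * c x + (w x / Z - u))); last first.
  move=> x _; rewrite /kl ln_div ?posrE ?divr_gt0 ?expR_gt0 // ln_div ?posrE ?expR_gt0 //.
  by rewrite lnM ?posrE // expRK; ring.
have sum_wZ : \sum_x w x / Z = 1 by rewrite -mulr_suml divff // gt_eqF.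
have sum_const k : \sum_(x : I) k = k * #|I|%:R by rewrite sumr_const mulr_natr.
rewrite !big_split /= sum_wZ -mulr_sumr !sum_const.
by rewrite mulrCA u_card mulr1 -mulr_sumr mulNr u_card; ring.
Qed.

Lemma kl_gibbs_le_ln : \sum_x kl u (w x / Z) <= ln Z + u * \sum_x c x.
Proof.
rewrite kl_gibbsE lnM ?posrE // lerD2r gerDr ln_le0 //.
by rewrite -[X in _ <= X]u_card ler_pMr // ler1n.
Qed.

Lemma kl_gibbs_le_l1 v : u <= v -> v <= 1 ->
  \sum_x kl u (w x / Z) <= \sum_x `|v * c x + w x|.
Proof.
move=> u_le_v v_le1; rewrite kl_gibbsE.
apply: le_trans (_ : u * Z + u * \sum_x c x <= _).
  by rewrite lerD2r (le_trans (ln_le_subr1 _)) ?mulr_gt0 // lerBlDr lerDl.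
rewrite !mulr_sumr -big_split /=; apply: ler_sum => x _.
apply: le_trans (ler_norm _); rewrite -subr_ge0.
have -> : v * c x + w x - (u * w x + u * c x) = (1 - v) * w x + (v - u) * (w x + c x).
  by ring.
have w_ge : 1 - c x <= w x by exact: expR_ge1Dx.
by rewrite addr_ge0 // mulr_ge0 ?subr_ge0 ?(ltW (expR_gt0 _)) //; lra.
Qed.

End Gibbs.
End KullbackLeibler.

Section Projections.
Variables (R : realType) (d : nat).
Hypothesis d_gt0 : (0 < d)%N.
Implicit Types (g : 'I_d -> R) (M : 'I_d -> 'I_d -> R).

Definition prob_vec g := (forall a, 0 < g a) /\ \sum_a g a = 1.
Definition prob_mx M := (forall a b, 0 < M a b) /\ \sum_a \sum_b M a b = 1.

Definition node_pot g := \sum_a kl d%:R^-1 (g a).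
Definition edge_pot M := \sum_a \sum_b kl (d%:R ^+ 2)^-1 (M a b).
Definition proj_gain g M g' M' := node_pot g - node_pot g' + (edge_pot M - edge_pot M').

Definition dist_vec g g' := \sum_a `|g' a - g a|.
Definition dist_mx M M' := \sum_a \sum_b `|M' a b - M a b|.

Definition row_node_update g M := normalize1 (fun a => g a * Num.sqrt (rowsum M a / g a)).
Definition row_edge_update g M :=
  normalize2 (fun a b => M a b * Num.sqrt (g a / rowsum M a)).
Definition col_node_update g M := normalize1 (fun b => g b * Num.sqrt (colsum M b / g b)).
Definition col_edge_update g M :=
  normalize2 (fun a b => M a b * Num.sqrt (g b / colsum M b)).

Let u_gt0 : 0 < d%:R^-1 :> R. Proof. by rewrite invr_gt0 ltr0n. Qed.
Let u2_gt0 : 0 < (d%:R ^+ 2)^-1 :> R. Proof. by rewrite invr_gt0 exprn_gt0 ?ltr0n. Qed.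

Let d_neq0 : d%:R != 0 :> R. Proof. by rewrite pnatr_eq0 -lt0n. Qed.

Let sum_const (x : R) : \sum_(a < d) x = d%:R * x.
Proof. by rewrite sumr_const card_ord mulr_natl. Qed.

Lemma node_pot_ge0 g : prob_vec g -> 0 <= node_pot g.
Proof. by case=> g_gt0 _; apply: sumr_ge0 => a _; exact: kl_ge0. Qed.

Lemma edge_pot_ge0 M : prob_mx M -> 0 <= edge_pot M.
Proof.
by case=> M_gt0 _; apply: sumr_ge0 => a _; apply: sumr_ge0 => b _; exact: kl_ge0.
Qed.

Lemma normalize1_prob (f : 'I_d -> R) : (forall a, 0 < f a) -> prob_vec (normalize1 f).
Proof.
move=> f_gt0; have sum_gt0 : 0 < \sum_a f a by apply: (psumr_gt0 (Ordinal d_gt0)).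
split=> [a|]; first by rewrite divr_gt0.
by rewrite -mulr_suml divff ?gt_eqF.
Qed.

Lemma normalize2_prob (f : 'I_d -> 'I_d -> R) : (forall a b, 0 < f a b) ->
  prob_mx (normalize2 f).
Proof.
move=> f_gt0; have sum_gt0 : 0 < \sum_a \sum_b f a b.
  by apply: (psumr_gt0 (Ordinal d_gt0)) => a; apply: (psumr_gt0 (Ordinal d_gt0)).
split=> [a b|]; first by rewrite divr_gt0.
rewrite -[RHS](@divff _ (\sum_a \sum_b f a b)) ?gt_eqF // mulr_suml.
by apply: eq_bigr => a _; rewrite -mulr_suml.
Qed.

Lemma node_pot_gibbs_le (eta : R) (c : 'I_d -> R) :
  node_pot (normalize1 (fun x => expR (- (eta * c x)))) <=
  Num.min (\sum_x `|eta * c x / d%:R + expR (- (eta * c x))|)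
          (ln (\sum_x expR (- (eta * c x))) + \sum_x eta / d%:R * c x).
Proof.
have u_card : d%:R^-1 * #|'I_d|%:R = 1 :> R by rewrite card_ord mulVf.
rewrite le_min; apply/andP; split.
  apply: le_trans (kl_gibbs_le_l1 (fun x => eta * c x) u_gt0 u_card (lexx _) _) _.
    by rewrite invf_le1 ?ltr0n // ler1n.
  by apply: ler_sum => x _; rewrite mulrC.
apply: le_trans (kl_gibbs_le_ln (fun x => eta * c x) u_gt0 u_card) _.
by rewrite lerD2l mulr_sumr; apply: ler_sum => x _; rewrite mulrCA mulrA.
Qed.

Lemma edge_pot_gibbs_le (eta : R) (c : 'I_d -> 'I_d -> R) :
  edge_pot (normalize2 (fun a b => expR (- (eta * c a b)))) <=
  Num.min (\sum_a \sum_b `|eta * c a b / d%:R + expR (- (eta * c a b))|)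
          (ln (\sum_a \sum_b expR (- (eta * c a b))) +
           \sum_a \sum_b eta / (d%:R ^+ 2) * c a b).
Proof.
have u2_card : (d%:R ^+ 2)^-1 * #|{: 'I_d * 'I_d}|%:R = 1 :> R.
  by rewrite card_prod card_ord natrM -expr2 mulVf ?expf_neq0.
have u2_le : (d%:R ^+ 2)^-1 <= d%:R^-1 :> R.
  by rewrite -exprVn expr2 ler_piMr ?invr_ge0 ?ler0n // invf_le1 ?ltr0n // ler1n.
rewrite /edge_pot /normalize2 !pair_bigA le_min; apply/andP; split.
  apply: le_trans (kl_gibbs_le_l1 (fun x => eta * c x.1 x.2) u2_gt0 u2_card u2_le _) _.
    by rewrite invf_le1 ?ltr0n // ler1n.
  by apply: ler_sum => x _; rewrite mulrC.
apply: le_trans (kl_gibbs_le_ln (fun x => eta * c x.1 x.2) u2_gt0 u2_card) _.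
by rewrite lerD2l mulr_sumr; apply: ler_sum => x _; rewrite mulrCA mulrA.
Qed.

Lemma node_pot_sub g g' : prob_vec g -> prob_vec g' ->
  node_pot g - node_pot g' = \sum_a d%:R^-1 * (ln (g' a) - ln (g a)).
Proof.
move=> [g_gt0 g_sum1] [g'_gt0 g'_sum1]; rewrite /node_pot -sumrB.
under eq_bigr do rewrite kl_sub //.
by rewrite big_split /= sumrB g_sum1 g'_sum1 subrr addr0.
Qed.

Lemma edge_pot_sub M M' : prob_mx M -> prob_mx M' ->
  edge_pot M - edge_pot M' = \sum_a \sum_b (d%:R ^+ 2)^-1 * (ln (M' a b) - ln (M a b)).
Proof.
move=> [M_gt0 M_sum1] [M'_gt0 M'_sum1]; rewrite /edge_pot -sumrB.
transitivity (\sum_a (\sum_b (d%:R ^+ 2)^-1 * (ln (M' a b) - ln (M a b))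
                      + (\sum_b M a b - \sum_b M' a b))).
  by apply: eq_bigr => a _; rewrite -!sumrB -big_split; apply: eq_bigr => b _; apply: kl_sub.
by rewrite big_split /= sumrB M_sum1 M'_sum1 subrr addr0.
Qed.

Section RowProjection.
Variables (g : 'I_d -> R) (M : 'I_d -> 'I_d -> R).
Hypotheses (g_prob : prob_vec g) (M_prob : prob_mx M).

Let g' := row_node_update g M.
Let M' := row_edge_update g M.
Let p a := Num.sqrt (g a).
Let q a := Num.sqrt (rowsum M a).
Let s := \sum_a p a * q a.
Let H := \sum_a (q a - p a) ^+ 2.

Let g_gt0 a : 0 < g a. Proof. by case: g_prob. Qed.
Let rowsum_gt0 a : 0 < rowsum M a.
Proof. by case: M_prob => M_gt0 _; apply: (psumr_gt0 a) => b. Qed.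
Let p_gt0 a : 0 < p a. Proof. by rewrite sqrtr_gt0. Qed.
Let q_gt0 a : 0 < q a. Proof. by rewrite sqrtr_gt0. Qed.
Let gE a : g a = p a ^+ 2. Proof. by rewrite sqr_sqrtr // ltW. Qed.
Let rowsumE a : rowsum M a = q a ^+ 2. Proof. by rewrite sqr_sqrtr // ltW. Qed.
Let p_norm1 : \sum_a p a ^+ 2 = 1.
Proof. by case: g_prob => _ <-; apply: eq_bigr => a _; rewrite gE. Qed.
Let q_norm1 : \sum_a q a ^+ 2 = 1.
Proof. by case: M_prob => _ <-; apply: eq_bigr => a _; rewrite -rowsumE. Qed.
Let s_gt0 : 0 < s. Proof. exact: bhattacharyya_gt0. Qed.

Let sqrt_div (x y : R) : 0 <= x -> 0 <= y -> Num.sqrt (x / y) = Num.sqrt x / Num.sqrt y.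
Proof. by move=> x0 y0; rewrite sqrtrM // sqrtrV. Qed.

Let g'E a : g' a = p a * q a / s.
Proof.
have num b : g b * Num.sqrt (rowsum M b / g b) = p b * q b.
  by rewrite sqrt_div ?ltW // -/(p b) -/(q b) gE; field; rewrite gt_eqF.
by rewrite /g' /row_node_update /normalize1 num (eq_bigr _ (fun b _ => num b)).
Qed.

Let M'E a b : M' a b = M a b * (p a / q a) / s.
Proof.
have num x y : M x y * Num.sqrt (g x / rowsum M x) = M x y * (p x / q x).
  by rewrite sqrt_div ?ltW.
rewrite /M' /row_edge_update /normalize2 num; congr (_ / _).
under eq_bigr do under eq_bigr do rewrite num.
apply: eq_bigr => x _; rewrite -mulr_suml -/(rowsum M x) rowsumE.
by field; rewrite gt_eqF.
Qed.

Lemma row_projection_prob : prob_vec g' /\ prob_mx M'.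
Proof.
split; split.
- by move=> a; rewrite g'E !mulr_gt0 ?invr_gt0.
- by rewrite (eq_bigr _ (fun a _ => g'E a)) -mulr_suml divff ?gt_eqF.
- by move=> a b; case: M_prob => M_gt0 _; rewrite M'E !mulr_gt0 ?invr_gt0.
rewrite -[RHS](@divff _ s) ?gt_eqF // mulr_suml; apply: eq_bigr => a _.
rewrite (eq_bigr _ (fun b _ => M'E a b)) -!mulr_suml -/(rowsum M a) rowsumE.
by rewrite mulrCA expr2 mulfK ?gt_eqF.
Qed.

Lemma row_projection_gainE : proj_gain g M g' M' = - 2 * ln s.
Proof.
have [g'_prob M'_prob] := row_projection_prob.
have node_ln a : ln (g' a) - ln (g a) = ln (q a) - ln (p a) - ln s.
  by rewrite g'E gE ln_div ?lnM ?lnXn ?posrE ?mulr_gt0 //; ring.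
have edge_ln a b : ln (M' a b) - ln (M a b) = ln (p a) - ln (q a) - ln s.
  have M_gt0 : 0 < M a b by case: M_prob.
  have pa := p_gt0 a; have qa := q_gt0 a.
  by rewrite M'E !ln_div ?lnM ?lnV ?posrE ?mulr_gt0 ?divr_gt0 ?invr_gt0 //; ring.
rewrite /proj_gain node_pot_sub // edge_pot_sub // -big_split /=.
transitivity (\sum_(a < d) d%:R^-1 * (- 2 * ln s)).
  apply: eq_bigr => a _; rewrite node_ln.
  rewrite (eq_bigr (fun=> (d%:R ^+ 2)^-1 * (ln (p a) - ln (q a) - ln s))) => [|b _].
    by rewrite sum_const; field.
  by rewrite edge_ln.
by rewrite sum_const mulrA divff // mul1r.
Qed.

Lemma row_projection_bounds :
  let D := proj_gain g M g' M' in
  [/\ 0 <= D, \sum_a `|rowsum M a - g a| <= 2 * Num.sqrt D,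
      dist_vec g g' <= 2 * Num.sqrt D & dist_mx M M' <= 2 * Num.sqrt D].
Proof.
move=> D.
have H_le : H <= D by rewrite /D row_projection_gainE; exact: hellinger_le_ln.
have H_ge0 : 0 <= H by apply: sumr_ge0 => a _; exact: sqr_ge0.
have sqrtH_le : 2 * Num.sqrt H <= 2 * Num.sqrt D by rewrite ler_pM2l // ler_wsqrtr.
split; first exact: le_trans H_le.
- apply: le_trans sqrtH_le.
  rewrite (eq_bigr (fun a => `|q a ^+ 2 - p a ^+ 2|)) => [|a _]; last by rewrite rowsumE gE.
  exact: sum_sqr_sub_le.
- apply: le_trans sqrtH_le.
  rewrite /dist_vec (eq_bigr (fun a => `|p a * q a / s - p a ^+ 2|)) => [|a _].
    exact: sum_geomean_sub_le.
  by rewrite g'E gE.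
apply: le_trans sqrtH_le.
have -> : H = \sum_a (p a - q a) ^+ 2 by apply: eq_bigr => a _; rewrite -sqrrN opprB.
have -> : dist_mx M M' = \sum_a `|q a * p a / \sum_b q b * p b - q a ^+ 2|.
  have s_sym : \sum_b q b * p b = s by apply: eq_bigr => b _; rewrite mulrC.
  rewrite /dist_mx s_sym; apply: eq_bigr => a _.
  have qa := q_gt0 a; have s0 := s_gt0.
  rewrite (eq_bigr (fun b => M a b * `|p a / q a / s - 1|)) => [|b _].
    rewrite -mulr_suml -/(rowsum M a) rowsumE -{1}[q a ^+ 2]ger0_norm ?sqr_ge0 // -normrM.
    by congr `|_|; field; rewrite !gt_eqF.
  have M_gt0 : 0 < M a b by case: M_prob.
  rewrite M'E -[M a b in RHS]ger0_norm ?ltW // -normrM.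
  by congr `|_|; field; rewrite !gt_eqF.
exact: sum_geomean_sub_le.
Qed.

End RowProjection.

Let tr M a b := M b a.

Let prob_mx_tr M : prob_mx M -> prob_mx (tr M).
Proof. by case=> M_gt0 M_sum1; split=> [a b|]; [exact: M_gt0 | rewrite exchange_big]. Qed.

Let edge_pot_tr M : edge_pot (tr M) = edge_pot M.
Proof. by rewrite /edge_pot exchange_big. Qed.

Let proj_gain_tr g M g' M' : proj_gain g M g' (tr M') = proj_gain g (tr M) g' M'.
Proof. by rewrite /proj_gain (edge_pot_tr M) (edge_pot_tr M'). Qed.

Let dist_mx_tr M M' : dist_mx M (tr M') = dist_mx (tr M) M'.
Proof. by rewrite /dist_mx exchange_big. Qed.

Let col_edge_updateE g M : col_edge_update g M = tr (row_edge_update g (tr M)).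
Proof.
rewrite /col_edge_update /row_edge_update /normalize2 /tr.
by apply/funext => a; apply/funext => b; rewrite [in RHS]exchange_big.
Qed.

Lemma col_projection_prob g M : prob_vec g -> prob_mx M ->
  prob_vec (col_node_update g M) /\ prob_mx (col_edge_update g M).
Proof.
move=> g_prob /prob_mx_tr M_prob; have [] := row_projection_prob g_prob M_prob.
by rewrite col_edge_updateE; split=> //; exact: prob_mx_tr.
Qed.

Lemma col_projection_bounds g M : prob_vec g -> prob_mx M ->
  let D := proj_gain g M (col_node_update g M) (col_edge_update g M) in
  [/\ 0 <= D, \sum_b `|colsum M b - g b| <= 2 * Num.sqrt D,
      dist_vec g (col_node_update g M) <= 2 * Num.sqrt D &
      dist_mx M (col_edge_update g M) <= 2 * Num.sqrt D].
Proof.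
move=> g_prob /prob_mx_tr M_prob.
by rewrite col_edge_updateE proj_gain_tr dist_mx_tr; exact: row_projection_bounds.
Qed.

End Projections.

Section HalfSteps.
Variables (R : realType) (n d : nat).
Hypothesis d_gt0 : (0 < d)%N.
Local Notation marg := (marg R n d).
Local Notation edge := (edge n).
Implicit Types (G : marg) (E : seq edge) (p : edge * bool).

Definition half_step p G : marg :=
  if p.2 then P_norm_j p.1 (P_to_j p.1 G) else P_norm_i p.1 (P_to_i p.1 G).
Definition half_node p : 'I_n := if p.2 then p.1.2 else p.1.1.
Definition half_err p G : R := if p.2 then err_col G p.1 else err_row G p.1.

Definition half_node_update p G : 'I_d -> R :=
  let: (g, M) := (mnode G (half_node p), medge G p.1.1 p.1.2) in
  if p.2 then col_node_update g M else row_node_update g M.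
Definition half_edge_update p G : 'I_d -> 'I_d -> R :=
  let: (g, M) := (mnode G (half_node p), medge G p.1.1 p.1.2) in
  if p.2 then col_edge_update g M else row_edge_update g M.

Lemma mnode_half_step p G k :
  mnode (half_step p G) k = if k == half_node p then half_node_update p G else mnode G k.
Proof.
by case: p => [[i j] []]; rewrite /half_step /half_node /P_norm_j /P_to_j /P_norm_i /P_to_i
  /upd_node /upd_edge /= !eqxx /=; case: eqP.
Qed.

Lemma medge_half_step p G k l :
  medge (half_step p G) k l = if (k, l) == p.1 then half_edge_update p G else medge G k l.
Proof.
by case: p => [[i j] []]; rewrite /half_step /half_node /P_norm_j /P_to_j /P_norm_i /P_to_i
  /upd_node /upd_edge /= xpair_eqE !eqxx /=; case: andP.
Qed.

Definition normalized G :=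
  (forall k, prob_vec (mnode G k)) /\ (forall k l, prob_mx (medge G k l)).

Definition potential E G :=
  \sum_k node_pot (mnode G k) + \sum_(e <- E) edge_pot (medge G e.1 e.2).

Lemma potential_ge0 E G : normalized G -> 0 <= potential E G.
Proof.
case=> G_node G_edge; rewrite addr_ge0 //.
  by apply: sumr_ge0 => k _; exact: node_pot_ge0.
by apply: sumr_ge0 => e _; exact: edge_pot_ge0.
Qed.

Let half_gain p G := proj_gain (mnode G (half_node p)) (medge G p.1.1 p.1.2)
  (half_node_update p G) (half_edge_update p G).

Lemma half_step_normalized p G : normalized G -> normalized (half_step p G).
Proof.
move=> [G_node G_edge]; have upd_prob :
    prob_vec (half_node_update p G) /\ prob_mx (half_edge_update p G).
  rewrite /half_node_update /half_edge_update.
  by case: p.2; [exact: col_projection_prob | exact: row_projection_prob].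
split=> [k | k l]; rewrite ?mnode_half_step ?medge_half_step; case: ifP => // _.
  exact: upd_prob.1.
exact: upd_prob.2.
Qed.

Lemma potential_half_step E p G : p.1 \in E -> uniq E ->
  potential E G - potential E (half_step p G) = half_gain p G.
Proof.
move=> pE uE; rewrite /potential /half_gain.
rewrite (bigD1 (half_node p)) //= [X in _ - (X + _)](bigD1 (half_node p)) //=.
rewrite (bigD1_seq p.1) //= [X in _ - (_ + X)](bigD1_seq p.1) //=.
rewrite mnode_half_step medge_half_step -surjective_pairing !eqxx.
under [X in _ - ((_ + X) + _)]eq_bigr => k /negbTE k_neq do rewrite mnode_half_step k_neq.
under [X in _ - (_ + (_ + X))]eq_bigr => e e_neq do
  rewrite medge_half_step -surjective_pairing (negbTE e_neq).
rewrite /proj_gain; ring.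
Qed.

Lemma half_step_bounds p G : normalized G ->
  let D := half_gain p G in
  [/\ 0 <= D, half_err p G <= 2 * Num.sqrt D,
      dist_vec (mnode G (half_node p)) (half_node_update p G) <= 2 * Num.sqrt D &
      dist_mx (medge G p.1.1 p.1.2) (half_edge_update p G) <= 2 * Num.sqrt D].
Proof.
move=> [G_node G_edge]; rewrite /half_gain /half_err /half_node_update /half_edge_update.
by case: p => [[i j] []] /=; [exact: col_projection_bounds | exact: row_projection_bounds].
Qed.

Lemma half_step_gain E p G : p.1 \in E -> uniq E -> normalized G ->
  let D := potential E G - potential E (half_step p G) in
  0 <= D /\ half_err p G <= 2 * Num.sqrt D.
Proof.
move=> pE uE G_norm; rewrite /= potential_half_step //.
by have [] := half_step_bounds p G_norm.
Qed.

Let sum_dist_le (x y x' y' : 'I_d -> R) :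
  \sum_a `|x a - y a| <= \sum_a `|x' a - y' a| + \sum_a `|y' a - y a| + \sum_a `|x' a - x a|.
Proof.
rewrite -!big_split; apply: ler_sum => a _ /=.
rewrite (le_trans (ler_distD (x' a) _ _)) // [`|x a - _|]distrC [X in _ <= X]addrC.
by rewrite lerD2l ler_distD.
Qed.

Lemma half_err_le p G G' :
  half_err p G <= half_err p G' + dist_vec (mnode G (half_node p)) (mnode G' (half_node p))
                  + dist_mx (medge G p.1.1 p.1.2) (medge G' p.1.1 p.1.2).
Proof.
case: p => [[i j] []]; rewrite /half_err /half_node /=.
  apply: le_trans (sum_dist_le _ _ (colsum (medge G' i j)) (mnode G' j)) _.
  rewrite lerD2l /dist_mx exchange_big; apply: ler_sum => b _.
  by rewrite /colsum -sumrB ler_norm_sum.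
apply: le_trans (sum_dist_le _ _ (rowsum (medge G' i j)) (mnode G' i)) _.
by rewrite lerD2l; apply: ler_sum => a _; rewrite /rowsum -sumrB ler_norm_sum.
Qed.

Definition half_touches p p' := (half_node p' == half_node p) || (p'.1 == p.1).

Let half_eq p p' : p'.1.1 != p'.1.2 -> half_node p' = half_node p -> p'.1 = p.1 -> p' = p.
Proof.
case: p p' => [[i j] b] [[i' j'] b'] /= ij node [ii jj]; subst i' j'.
by case: b b' node => [] [] //; rewrite /half_node /= => node; rewrite node eqxx in ij.
Qed.

Lemma half_err_half_step_le E p p' G :
  p'.1 \in E -> uniq E -> p'.1.1 != p'.1.2 -> p' != p -> normalized G ->
  half_err p G <= half_err p (half_step p' G)
    + 2 * Num.sqrt ((half_touches p p')%:R * (potential E G - potential E (half_step p' G))).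
Proof.
move=> p'E uE p'_simple p'_neq G_norm; rewrite potential_half_step //.
have [D_ge0 _ node_le edge_le] := half_step_bounds p' G_norm.
have dist_vec0 g : dist_vec g g = 0 by rewrite /dist_vec big1 // => a _; rewrite subrr normr0.
have dist_mx0 M : dist_mx M M = 0.
  by rewrite /dist_mx big1 // => a _; rewrite big1 // => b _; rewrite subrr normr0.
have not_both : ~~ ((half_node p' == half_node p) && (p'.1 == p.1)).
  by apply: contra p'_neq => /andP [/eqP node_eq /eqP edge_eq]; apply/eqP; exact: half_eq.
apply: le_trans (half_err_le p G (half_step p' G)) _.
rewrite mnode_half_step medge_half_step -(surjective_pairing p.1) -addrA lerD2l /half_touches.
rewrite [half_node p == _]eq_sym [p.1 == _]eq_sym.
move: not_both; case: eqP => [<-|_]; case: eqP => [<-|_] //= _.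
- by rewrite dist_mx0 addr0 mul1r.
- by rewrite dist_vec0 add0r mul1r.
- by rewrite dist_vec0 dist_mx0 addr0 mul0r sqrtr0 mulr0.
Qed.

End HalfSteps.

Section Sweeps.
Variables (R : realType) (n d : nat).
Hypothesis d_gt0 : (0 < d)%N.
Local Notation marg := (marg R n d).
Local Notation edge := (edge n).
Implicit Types (G : marg) (E : seq edge) (p : edge * bool) (L : seq (edge * bool)).

Definition sweep L G := foldl (fun G p => half_step p G) G L.

Definition halves E := [seq (e, b) | e <- E, b <- [:: false; true]].

Lemma cyclic_stepE E G : cyclic_step E G = sweep (halves E) G.
Proof. by rewrite /cyclic_step /sweep; elim: E G => //= e E IH G; rewrite IH. Qed.

Lemma mem_halves E p : p \in halves E -> p.1 \in E.
Proof. by case/allpairsP => [[e b] [eE _ ->]]. Qed.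

Lemma halves_uniq E : uniq E -> uniq (halves E).
Proof. by move=> uE; apply: allpairs_uniq => // -[? ?] [? ?]. Qed.

Lemma sweep_normalized L G : normalized G -> normalized (sweep L G).
Proof. by elim: L G => //= p L IH G G_norm; apply/IH/half_step_normalized. Qed.

Lemma sweep_potential_le E L G : uniq E -> {in L, forall p, p.1 \in E} -> normalized G ->
  potential E (sweep L G) <= potential E G.
Proof.
move=> uE; elim: L G => //= p L IH G L_in G_norm.
have [gain_ge0 _] := half_step_gain d_gt0 (L_in p (mem_head _ _)) uE G_norm.
apply: le_trans (IH _ _ (half_step_normalized p G_norm)) _.
  by move=> q qL; apply: L_in; rewrite in_cons qL orbT.
by rewrite -subr_ge0.
Qed.

Lemma sweep_half_err_le E L p G : uniq E ->
  {in L, forall p', [/\ p'.1 \in E, p'.1.1 != p'.1.2 & p' != p]} -> normalized G ->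
  half_err p G <= half_err p (sweep L G)
    + 2 * Num.sqrt ((count (half_touches p) L)%:R * (potential E G - potential E (sweep L G))).
Proof.
move=> uE; elim: L G => [|p' L IH] G L_ok G_norm /=.
  by rewrite mul0r sqrtr0 mulr0 addr0.
have [p'E p'_simple p'_neq] := L_ok p' (mem_head _ _).
have L_ok' : {in L, forall q, [/\ q.1 \in E, q.1.1 != q.1.2 & q != p]}.
  by move=> q qL; apply: L_ok; rewrite in_cons qL orbT.
have G1_norm := half_step_normalized p' G_norm.
set G1 := half_step p' G.
have [gain_ge0 _] := half_step_gain d_gt0 p'E uE G_norm.
have rest_ge0 : 0 <= potential E G1 - potential E (sweep L G1).
  rewrite subr_ge0 sweep_potential_le // => q /L_ok'; by case.
have step := half_err_half_step_le d_gt0 p'E uE p'_simple p'_neq G_norm.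
have rest := IH G1 L_ok' G1_norm.
have := sqrt_add_le_sqrtM (ler0n _ (half_touches p p')) gain_ge0
  (ler0n _ (count (half_touches p) L)) rest_ge0.
rewrite -natrD -/G1 (_ : potential E G - potential E G1 + _ =
  potential E G - potential E (sweep L G1)); last by ring.
by move: step rest; rewrite -/G1; lra.
Qed.

Lemma count_touches_halves E p : {in E, forall e, e.1 != e.2} -> uniq E ->
  (count (half_touches p) (halves E) <= (vdeg E (half_node p)).+1)%N.
Proof.
(* Besides the [vdeg] half-steps at [half_node p], only the other half of [p.1] touches [p]. *)
move=> simple uE; apply: (@leq_trans (vdeg E (half_node p) + count_mem p.1 E)).
  elim: E simple {uE} => //= e E IH simple.
  have /IH count_le : {in E, forall e, e.1 != e.2}.
    by move=> e' e'E; apply: simple; rewrite in_cons e'E orbT.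
  rewrite addnA [X in (_ <= X)%N]addnACA leq_add //.
  move: (simple e (mem_head _ _)); rewrite /half_touches; set v := half_node p.
  rewrite /half_node /=; case: (e =P p.1) => [-> _ | _].
    by rewrite !orbT /v /half_node; case: p.2; rewrite eqxx ?orbT.
  by rewrite !orbF addn0; case: (e.1 =P v) => [->|_]; case: (e.2 =P v) => [->|_]; rewrite ?eqxx.
by rewrite count_uniq_mem // -addn1 leq_add2l leq_b1.
Qed.

Lemma halves_split E p : is_graph E -> p \in halves E ->
  exists L1 L2, [/\ halves E = L1 ++ p :: L2,
    {in L1, forall p', [/\ p'.1 \in E, p'.1.1 != p'.1.2 & p' != p]},
    {in L2, forall p', p'.1 \in E} & (count (half_touches p) L1 <= maxdeg E)%N].
Proof.
case=> uE simple _ _ p_in.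
have [L1 [L2 halvesE]] : exists L1 L2, halves E = L1 ++ p :: L2.
  by case/splitPr: p_in => L1 L2; exists L1, L2.
have pL1 : p \notin L1.
  by move: (halves_uniq uE); rewrite halvesE cat_uniq /= => /and3P [_ /norP []].
exists L1, L2; split=> // [p' p'L1 | p' p'L2 |].
- have p'E : p'.1 \in E by apply: mem_halves; rewrite halvesE mem_cat p'L1.
  by split=> //; [exact: simple | apply: contraNneq pL1 => <-].
- by apply: mem_halves; rewrite halvesE mem_cat in_cons p'L2 !orbT.
have := count_touches_halves p simple uE.
rewrite halvesE count_cat /= /half_touches !eqxx /= add1n addnS ltnS.
move=> /(leq_trans (leq_addr _ _)) /leq_trans; apply.
exact: leq_bigmax.
Qed.

Lemma cyclic_step_gain E p G (eps : R) : is_graph E -> normalized G -> p \in halves E ->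
  0 <= eps -> eps <= half_err p G ->
  eps ^+ 2 <= 4 * (maxdeg E).+1%:R * (potential E G - potential E (cyclic_step E G)).
Proof.
move=> E_graph G_norm p_in eps_ge0 eps_le; have [uE _ _ _] := E_graph.
have [L1 [L2 [halvesE L1_ok L2_in W_le]]] := halves_split E_graph p_in.
rewrite cyclic_stepE halvesE /sweep foldl_cat /= -/(sweep L1 G) -/(sweep L2 _).
set G1 := sweep L1 G; set G2 := half_step p G1.
have G1_norm : normalized G1 by exact: sweep_normalized.
have prefix := sweep_half_err_le uE L1_ok G_norm; rewrite -/G1 in prefix.
have [gain_ge0 at_p] := half_step_gain d_gt0 (mem_halves p_in) uE G1_norm.
rewrite -/G2 in gain_ge0 at_p.
have suffix : potential E (sweep L2 G2) <= potential E G2.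
  exact/sweep_potential_le/half_step_normalized.
have prefix_ge0 : 0 <= potential E G - potential E G1.
  by rewrite subr_ge0 sweep_potential_le // => p' /L1_ok [].
rewrite -mulrA; apply: sqr_le_of_le_2sqrt => //; first by rewrite mulr_ge0 //; lra.
have := sqrt_add_le_sqrtM (ler0n _ 1) gain_ge0 (ler0n _ (count (half_touches p) L1)) prefix_ge0.
rewrite mul1r -natrD add1n => combined.
apply: le_trans (_ : _ <= 2 * Num.sqrt ((count (half_touches p) L1).+1%:R *
  (potential E G1 - potential E G2 + (potential E G - potential E G1)))) _; first lra.
rewrite ler_pM2l // ler_wsqrtr //; apply: ler_pM => //; first exact: addr_ge0.
  by rewrite ler_nat ltnS.
lra.
Qed.

End Sweeps.

Section Greedy.
Variables (R : realType) (n d : nat).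
Local Notation marg := (marg R n d).
Local Notation edge := (edge n).
Implicit Types (G : marg) (E : seq edge) (e : edge) (p : edge * bool).

Definition greedy_half G e := (e, ~~ (err_col G e < err_row G e)).

Lemma greedy_updateE e G : greedy_update e G = half_step (greedy_half G e) G.
Proof. by rewrite /greedy_update /half_step /=; case: (_ < _). Qed.

Lemma half_err_greedy e G : half_err (greedy_half G e) G = err G e.
Proof. by rewrite /half_err /err /=; case: ltP => [/ltW/max_l|/max_r]. Qed.

Lemma half_err_le_err p G : half_err p G <= err G p.1.
Proof. by rewrite /half_err /err le_max; case: p.2; rewrite lexx ?orbT. Qed.

Lemma not_converged_half_err E (eps : R) G : ~ converged E eps G ->
  exists2 p, p \in halves E & eps <= half_err p G.
Proof.
move=> not_conv; apply: contrapT => no_half; apply: not_conv => e eE.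
have half_lt b : half_err (e, b) G < eps.
  rewrite ltNge; apply/negP => eps_le; apply: no_half; exists (e, b) => //.
  by apply: allpairs_f => //; case: (b).
by split; [exact: (half_lt false) | exact: (half_lt true)].
Qed.

End Greedy.

Section InitialIterate.
Variables (R : realType) (n d : nat).
Hypothesis d_gt0 : (0 < d)%N.
Local Notation marg := (marg R n d).

Lemma emp_init_normalized eta (C : marg) : normalized (emp_init eta C).
Proof.
by split=> [k | k l]; [apply: normalize1_prob | apply: normalize2_prob] => // *;
  exact: expR_gt0.
Qed.

Lemma potential_emp_init_le E eta (C : marg) : potential E (emp_init eta C) <= S0 E eta C.
Proof.
rewrite /S0 le_min; apply/andP; split.
  rewrite /potential /l1_term; apply: lerD; apply: ler_sum => i _.
    by have := node_pot_gibbs_le d_gt0 eta (mnode C i); rewrite le_min => /andP [].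
  by have := edge_pot_gibbs_le d_gt0 eta (medge C i.1 i.2); rewrite le_min => /andP [].
rewrite /potential /S_const addrC; apply: lerD; apply: ler_sum => i _.
  by have := edge_pot_gibbs_le d_gt0 eta (medge C i.1 i.2); rewrite le_min => /andP [].
by have := node_pot_gibbs_le d_gt0 eta (mnode C i); rewrite le_min => /andP [].
Qed.

End InitialIterate.

Lemma potential_descent_stops (R : archiRealFieldType) (P Inv : nat -> Prop) (f : nat -> R)
    (S c K : R) :
  0 < c -> 0 <= K -> Inv 0%N -> f 0%N <= S -> (forall t, Inv t -> 0 <= f t) ->
  (forall t, Inv t -> ~ P t -> Inv t.+1 /\ c <= K * (f t - f t.+1)) ->
  exists t : nat, (Posz t <= Num.ceil (K * S / c))%R /\ P t.
Proof.
move=> c_gt0 K_ge0 Inv0 f0_le f_ge0 step; apply: contrapT => no_t.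
set x := K * S / c.
have descent t : (forall t', (t' < t)%N -> ~ P t') ->
    Inv t /\ t%:R * c <= K * (f 0%N - f t).
  elim: t => [|t IH] before; first by rewrite mul0r subrr mulr0.
  have [Inv_t dec_t] := IH (fun t' lt => before t' (ltnW lt)).
  have [Inv_t1 step_t] := step t Inv_t (before t (ltnSn t)).
  split=> //; rewrite -nat1r mulrDl mul1r.
  rewrite (_ : K * _ = K * (f 0%N - f t) + K * (f t - f t.+1)); last by ring.
  lra.
have x_ge0 : 0 <= x by rewrite divr_ge0 ?mulr_ge0 ?(ltW c_gt0) // (le_trans (f_ge0 _ Inv0)).
have before t' : (t' < (Num.truncn x).+1)%N -> ~ P t'.
  move=> t'_lt P_t'; apply: no_t; exists t'; split=> //.
  rewrite -(ler_int R); apply: le_trans (ceil_ge x).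
  apply: le_trans (_ : _ <= (Num.truncn x)%:R) _; first by rewrite ler_nat -ltnS.
  by rewrite truncn_le.
have [Inv_N dec_N] := descent _ before.
have := truncnS_gt x; rewrite ltNge => /negP; apply.
rewrite /x ler_pdivlMr // (le_trans dec_N) // ler_wpM2l //.
by have := f_ge0 _ Inv_N; lra.
Qed.

Section Iterations.
Variables (R : realType) (n d : nat) (E : seq (edge n)) (eta eps : R) (C : marg R n d).
Hypotheses (d_gt0 : (0 < d)%N) (E_graph : is_graph E) (eps_gt0 : 0 < eps).

Lemma emp_cyclic_step t :
  normalized (emp_cyclic E eta C t) -> ~ converged E eps (emp_cyclic E eta C t) ->
  normalized (emp_cyclic E eta C t.+1) /\ eps ^+ 2 <= 4 * (maxdeg E).+1%:R *
    (potential E (emp_cyclic E eta C t) - potential E (emp_cyclic E eta C t.+1)).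
Proof.
move=> t_norm not_conv; rewrite /emp_cyclic iterS -/(emp_cyclic E eta C t).
split; first by rewrite cyclic_stepE; exact: sweep_normalized.
have [p p_in eps_le] := not_converged_half_err not_conv.
exact: (cyclic_step_gain d_gt0 E_graph t_norm p_in (ltW eps_gt0) eps_le).
Qed.

Lemma emp_greedy_step Gs t : emp_greedy_run E eta eps C Gs ->
  normalized (Gs t) -> ~ converged E eps (Gs t) ->
  normalized (Gs t.+1) /\ eps ^+ 2 <= 4 * (potential E (Gs t) - potential E (Gs t.+1)).
Proof.
case=> _ Gs_step t_norm not_conv; have [e [eE e_max] ->] := Gs_step t not_conv.
rewrite greedy_updateE; split; first exact: half_step_normalized.
have [uE _ _ _] := E_graph; have [p p_in eps_le] := not_converged_half_err not_conv.
have [gain_ge0 err_le] := half_step_gain d_gt0 (p := greedy_half (Gs t) e) eE uE t_norm.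
apply: sqr_le_of_le_2sqrt (ltW eps_gt0) gain_ge0 _; apply: le_trans err_le.
rewrite half_err_greedy; apply: le_trans eps_le (le_trans (half_err_le_err _ _) _).
exact: e_max (mem_halves p_in).
Qed.

End Iterations.

Unset Implicit Arguments. Set Strict Implicit.

Theorem theorem2 (R : realType) (n d : nat) (E : seq (edge n))
    (eta eps : R) (C : marg R n d) :
  (0 < d)%N -> is_graph E -> 0 < eta -> 0 < eps ->
  (* EMP-cyclic *)
  (exists t : nat,
     (Posz t <= Num.ceil (4 * S0 E eta C * (maxdeg E).+1%:R / eps ^+ 2))%R
     /\ converged E eps (emp_cyclic E eta C t))
  /\
  (* EMP-greedy, for every admissible tie-breaking *)
  (forall Gs : nat -> marg R n d, emp_greedy_run E eta eps C Gs ->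
     exists t : nat,
       (Posz t <= Num.ceil (4 * S0 E eta C / eps ^+ 2))%R
       /\ converged E eps (Gs t)).
Proof.
move=> d_gt0 E_graph _ eps_gt0.
have eps2_gt0 : 0 < eps ^+ 2 by rewrite exprn_gt0.
have init_norm := emp_init_normalized d_gt0 eta C.
have init_le := potential_emp_init_le d_gt0 E eta C.
have pot_ge0 := @potential_ge0 R n d d_gt0 E.
split.
  have [t [t_le t_conv]] := potential_descent_stops
    (Inv := fun t => normalized (emp_cyclic E eta C t))
    (f := fun t => potential E (emp_cyclic E eta C t)) eps2_gt0
    (mulr_ge0 (ler0n _ 4) (ler0n _ _)) init_norm init_le (fun t => pot_ge0 _)
    (emp_cyclic_step d_gt0 E_graph eps_gt0).
  by exists t; rewrite [4 * _ * _]mulrAC.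
move=> Gs Gs_run; have [Gs0 _] := Gs_run; rewrite -Gs0 in init_norm init_le.
exact: (potential_descent_stops (Inv := fun t => normalized (Gs t))
  (f := fun t => potential E (Gs t)) eps2_gt0 (ler0n _ 4) init_norm init_le
  (fun t => pot_ge0 _) (fun t => emp_greedy_step d_gt0 E_graph eps_gt0 Gs_run)).
Qed.
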